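(* Let $z,x,y\in[0,1]$ satisfy $z=x+y$, and write their concise binary expansions as $z=(z_0.z_1z_2\ldots)_2$, $x=(x_0.x_1x_2\ldots)_2$, $y=(y_0.y_1y_2\ldots)_2$. Suppose $\ell\ge 0$ is an index such that $z_\ell=1$ and $z_j=0$ for all $j>\ell$. Then the sequence of bit pairs $(x_j,y_j)_{j\ge \ell}$ satisfies exactly one of the following three patterns: (1) $(x_\ell,y_\ell)\in\{(0,1),(1,0)\}$ and $(x_j,y_j)=(0,0)$ for all $j>\ell$; (2) $(x_\ell,y_\ell)\in\{(0,0),(1,1)\}$, and there is an integer $k\ge 0$ such that $(x_j,y_j)\in\{(0,1),(1,0)\}$ for $\ell<j\le \ell+k$, $(x_{\ell+k+1},y_{\ell+k+1})=(1,1)$, and $(x_j,y_j)=(0,0)$ for all $j>\ell+k+1$; (3) $(x_\ell,y_\ell)\in\{(0,0),(1,1)\}$ and $(x_j,y_j)\in\{(0,1),(1,0)\}$ for all $j>\ell$.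
   Context: A concise binary expansion of a real number is a binary representation $(z_0.z_1z_2\ldots)_2=\sum_{i\ge0} z_i2^{-i}$ with $z_i\in\{0,1\}$ that does not end in an infinite string of 1s. *)

From Stdlib Require Import Reals.
Open Scope R_scope.

Definition bitR (b : bool) : R := if b then 1 else 0.

Definition concise_expansion (b : nat -> bool) (r : R) : Prop :=
  infinite_sum (fun i => bitR (b i) / 2 ^ i) r /\
  ~ (exists N : nat, forall j : nat, (N <= j)%nat -> b j = true).

Definition pair_01_10 (xb yb : nat -> bool) (j : nat) : Prop :=
  (xb j = false /\ yb j = true) \/ (xb j = true /\ yb j = false).
Definition pair_00_11 (xb yb : nat -> bool) (j : nat) : Prop :=
  (xb j = false /\ yb j = false) \/ (xb j = true /\ yb j = true).
Definition pair_00 (xb yb : nat -> bool) (j : nat) : Prop :=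
  xb j = false /\ yb j = false.
Definition pair_11 (xb yb : nat -> bool) (j : nat) : Prop :=
  xb j = true /\ yb j = true.

Definition pattern1 (xb yb : nat -> bool) (l : nat) : Prop :=
  pair_01_10 xb yb l /\ (forall j, (l < j)%nat -> pair_00 xb yb j).

Definition pattern2 (xb yb : nat -> bool) (l : nat) : Prop :=
  pair_00_11 xb yb l /\
  exists k : nat,
    (forall j, (l < j)%nat -> (j <= l + k)%nat -> pair_01_10 xb yb j) /\
    pair_11 xb yb (l + k + 1)%nat /\
    (forall j, (l + k + 1 < j)%nat -> pair_00 xb yb j).

Definition pattern3 (xb yb : nat -> bool) (l : nat) : Prop :=
  pair_00_11 xb yb l /\ (forall j, (l < j)%nat -> pair_01_10 xb yb j).

From Stdlib Require Import Reals Lra Lia Classical.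
Open Scope R_scope.

(* Let A_n, B_n, C_n be the integers with binary digits x_0 ... x_n, y_0 ... y_n and
   z_0 ... z_n.  The remainder 2^n r - (integer with digits r_0 ... r_n) of a concise
   expansion lies in [0, 1): it is at most 1, and a remainder 1 forces the next digit to
   be 1 and the next remainder to be 1 again.  Hence A_n = floor (2^n x) etc., and
   z = x + y makes C_n - A_n - B_n a carry in {0, 1}.  After position l the digits of z
   vanish, so C_(n+1) = 2 C_n: without a carry all later pairs are (0,0) and no carry
   reappears; with a carry the next pair is (0,1) or (1,0) and the carry survives, or it
   is (1,1) and the carry is consumed.  Since C_l is odd, the carry at l is 0 exactly
   when x_l + y_l is odd.  The three patterns are: no carry at l, a carry consumed at
   l+k+1, a carry that is never consumed. *)

Definition partial_sum (b : nat -> bool) (n : nat) : R :=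
  sum_f_R0 (fun i => bitR (b i) / 2 ^ i) n.

Fixpoint prefix (b : nat -> bool) (n : nat) : nat :=
  match n with
  | O => Nat.b2n (b O)
  | S m => 2 * prefix b m + Nat.b2n (b (S m))
  end.

Definition remainder (b : nat -> bool) (r : R) (n : nat) : R :=
  2 ^ n * (r - partial_sum b n).

Lemma bitR_bounds c : 0 <= bitR c <= 1.
Proof. destruct c; simpl; lra. Qed.

Lemma bitR_b2n c : bitR c = INR (Nat.b2n c).
Proof. now destruct c. Qed.

Lemma prefix_partial_sum b n : INR (prefix b n) = 2 ^ n * partial_sum b n.
Proof.
  induction n as [|n IH]; unfold partial_sum in *; cbn [sum_f_R0].
  - cbn [prefix]. rewrite <- bitR_b2n. simpl. lra.
  - cbn [prefix]. rewrite plus_INR, mult_INR, IH, <- bitR_b2n.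
    simpl. field. apply pow_nonzero. lra.
Qed.

Lemma remainder_succ b r n :
  remainder b r (S n) = 2 * remainder b r n - bitR (b (S n)).
Proof.
  unfold remainder, partial_sum. cbn [sum_f_R0]. simpl pow.
  field. apply pow_nonzero. lra.
Qed.

Lemma digit_term_bounds c n : 0 <= bitR c / 2 ^ n <= 1 / 2 ^ n.
Proof.
  pose proof (bitR_bounds c). pose proof (pow_lt 2 n ltac:(lra)).
  unfold Rdiv. assert (0 < / 2 ^ n) by (apply Rinv_0_lt_compat; lra). nra.
Qed.

Lemma partial_sum_le b r n :
  infinite_sum (fun i => bitR (b i) / 2 ^ i) r -> partial_sum b n <= r.
Proof.
  intros Hr. apply (growing_ineq (partial_sum b)); [|exact Hr].
  intros m. unfold partial_sum. cbn [sum_f_R0].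
  pose proof (digit_term_bounds (b (S m)) (S m)). lra.
Qed.

Lemma le_partial_sum_add b r n :
  infinite_sum (fun i => bitR (b i) / 2 ^ i) r -> r <= partial_sum b n + 1 / 2 ^ n.
Proof.
  intros Hr.
  apply (decreasing_ineq (fun m => partial_sum b m + 1 / 2 ^ m)).
  - intros m. cbv beta. unfold partial_sum. cbn [sum_f_R0].
    pose proof (digit_term_bounds (b (S m)) (S m)).
    assert (1 / 2 ^ S m = 1 / 2 ^ m / 2) by (simpl; field; apply pow_nonzero; lra).
    lra.
  - rewrite <- (Rplus_0_r r). apply CV_plus; [exact Hr | apply cv_pow_half].
Qed.

Lemma remainder_bounds b r n :
  infinite_sum (fun i => bitR (b i) / 2 ^ i) r -> 0 <= remainder b r n <= 1.
Proof.
  intros Hr. unfold remainder.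
  pose proof (partial_sum_le b r n Hr). pose proof (le_partial_sum_add b r n Hr).
  pose proof (pow_lt 2 n).
  assert (2 ^ n * (1 / 2 ^ n) = 1) by (field; lra).
  split; nra.
Qed.

Lemma remainder_eq_1_succ b r n :
  infinite_sum (fun i => bitR (b i) / 2 ^ i) r ->
  remainder b r n = 1 -> remainder b r (S n) = 1 /\ b (S n) = true.
Proof.
  intros Hr Hn. pose proof (remainder_bounds b r (S n) Hr).
  rewrite remainder_succ, Hn in *.
  destruct (b (S n)); simpl in *; split; auto; lra.
Qed.

Lemma remainder_lt_1 b r n : concise_expansion b r -> remainder b r n < 1.
Proof.
  intros [Hr Hconcise].
  destruct (remainder_bounds b r n Hr) as [_ [Hlt | Hn]]; [exact Hlt | exfalso].
  assert (Hones : forall k, remainder b r (n + k) = 1).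
  { induction k as [|k IH]; [now rewrite Nat.add_0_r|].
    rewrite Nat.add_succ_r. now apply remainder_eq_1_succ. }
  apply Hconcise. exists (S n). intros j Hj.
  replace j with (S (n + (j - S n))) by lia.
  now apply (remainder_eq_1_succ b r).
Qed.

Lemma prefix_floor b r n :
  concise_expansion b r -> INR (prefix b n) <= 2 ^ n * r < INR (prefix b n) + 1.
Proof.
  intros Hb. pose proof (remainder_lt_1 b r n Hb).
  pose proof (remainder_bounds b r n (proj1 Hb)).
  unfold remainder in *. rewrite prefix_partial_sum. lra.
Qed.

Lemma prefix_add_carry b c d x y n :
  concise_expansion b x -> concise_expansion c y -> concise_expansion d (x + y) ->
  (prefix d n = prefix b n + prefix c n \/ prefix d n = prefix b n + prefix c n + 1)%nat.
Proof.
  intros Hb Hc Hd.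
  pose proof (prefix_floor b x n Hb). pose proof (prefix_floor c y n Hc).
  pose proof (prefix_floor d (x + y) n Hd).
  assert (INR (prefix b n + prefix c n) < INR (prefix d n + 1)) as Hlo%INR_lt
    by (rewrite !plus_INR; simpl; lra).
  assert (INR (prefix d n) < INR (prefix b n + prefix c n + 2)) as Hhi%INR_lt
    by (rewrite !plus_INR; simpl; lra).
  lia.
Qed.

Lemma prefix_parity b n : exists q, prefix b n = (2 * q + Nat.b2n (b n))%nat.
Proof. destruct n as [|n]; [exists 0%nat | exists (prefix b n)]; cbn [prefix]; lia. Qed.

Section Carries.

Variables (xb yb zb : nat -> bool) (l : nat).

Hypothesis prefix_sum : forall n,
  (prefix zb n = prefix xb n + prefix yb n \/ prefix zb n = prefix xb n + prefix yb n + 1)%nat.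
Hypothesis zb_l : zb l = true.
Hypothesis zb_after_l : forall j, (l < j)%nat -> zb j = false.

Let no_carry n := (prefix zb n = prefix xb n + prefix yb n)%nat.
Let carry n := (prefix zb n = prefix xb n + prefix yb n + 1)%nat.

Lemma prefix_succ_after_l n : (l <= n)%nat -> prefix zb (S n) = (2 * prefix zb n)%nat.
Proof. intros Hn. cbn [prefix]. rewrite zb_after_l by lia. simpl. lia. Qed.

Lemma no_carry_succ n : (l <= n)%nat -> no_carry n ->
  pair_00 xb yb (S n) /\ no_carry (S n).
Proof.
  intros Hn Hc. pose proof (prefix_sum (S n)).
  unfold no_carry, pair_00 in *. rewrite prefix_succ_after_l in * by exact Hn.
  cbn [prefix] in *. destruct (xb (S n)), (yb (S n)); cbn in *; intuition lia.
Qed.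

Lemma carry_succ n : (l <= n)%nat -> carry n ->
  (pair_01_10 xb yb (S n) /\ carry (S n)) \/ (pair_11 xb yb (S n) /\ no_carry (S n)).
Proof.
  intros Hn Hc. pose proof (prefix_sum (S n)).
  unfold carry, no_carry, pair_01_10, pair_11 in *.
  rewrite prefix_succ_after_l in * by exact Hn.
  cbn [prefix] in *. destruct (xb (S n)), (yb (S n)); cbn in *; intuition lia.
Qed.

Lemma no_carry_pair_l : no_carry l -> pair_01_10 xb yb l.
Proof.
  intros Hc. unfold no_carry, pair_01_10 in *.
  destruct (prefix_parity xb l), (prefix_parity yb l), (prefix_parity zb l).
  rewrite zb_l in *. destruct (xb l), (yb l); cbn in *; intuition lia.
Qed.

Lemma carry_pair_l : carry l -> pair_00_11 xb yb l.
Proof.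
  intros Hc. unfold carry, pair_00_11 in *.
  destruct (prefix_parity xb l), (prefix_parity yb l), (prefix_parity zb l).
  rewrite zb_l in *. destruct (xb l), (yb l); cbn in *; intuition lia.
Qed.

Lemma no_carry_pair_00_after n : (l <= n)%nat -> no_carry n ->
  forall j, (n < j)%nat -> pair_00 xb yb j.
Proof.
  intros Hn Hc.
  assert (Hall : forall d, no_carry (n + d)).
  { induction d as [|d IH]; [now rewrite Nat.add_0_r|].
    rewrite Nat.add_succ_r. apply no_carry_succ; [lia | exact IH]. }
  intros j Hj. replace j with (S (n + (j - S n))) by lia.
  apply no_carry_succ; [lia | apply Hall].
Qed.

Lemma carry_run k : carry l ->
  (carry (l + k) /\ forall j, (l < j)%nat -> (j <= l + k)%nat -> pair_01_10 xb yb j) \/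
  pattern2 xb yb l.
Proof.
  intros Hl. induction k as [|k [[Hc Hrun] | H2]]; [| | now right].
  - left. rewrite Nat.add_0_r. split; [exact Hl | lia].
  - rewrite Nat.add_succ_r.
    destruct (carry_succ (l + k) ltac:(lia) Hc) as [[Hp Hc'] | [Hp Hn']].
    + left. split; [exact Hc'|]. intros j Hj Hjk.
      destruct (Nat.eq_dec j (S (l + k))) as [-> | Hne]; [exact Hp | apply Hrun; lia].
    + right. split; [now apply carry_pair_l|]. exists k.
      rewrite Nat.add_1_r. split; [exact Hrun | split; [exact Hp|]].
      now apply no_carry_pair_00_after; [lia|].
Qed.

Lemma patterns_of_carries : pattern1 xb yb l \/ pattern2 xb yb l \/ pattern3 xb yb l.
Proof.
  destruct (prefix_sum l) as [Hn | Hc].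
  - left. split; [now apply no_carry_pair_l | now apply no_carry_pair_00_after].
  - destruct (classic (pattern2 xb yb l)) as [H2 | Hn2]; [now right; left|].
    right; right. split; [now apply carry_pair_l|]. intros j Hj.
    destruct (carry_run (j - l) Hc) as [[_ Hrun] | H2]; [apply Hrun; lia | contradiction].
Qed.

End Carries.

Lemma patterns_exclusive xb yb l :
  ~ (pattern1 xb yb l /\ pattern2 xb yb l) /\
  ~ (pattern1 xb yb l /\ pattern3 xb yb l) /\
  ~ (pattern2 xb yb l /\ pattern3 xb yb l).
Proof.
  unfold pattern1, pattern2, pattern3, pair_01_10, pair_00_11, pair_11.
  split; [|split].
  - intros [[H1 _] [H2 _]]. destruct (xb l), (yb l); intuition congruence.
  - intros [[H1 _] [H2 _]]. destruct (xb l), (yb l); intuition congruence.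
  - intros [[_ [k [_ [[Hx Hy] _]]]] [_ H3]].
    specialize (H3 (l + k + 1)%nat ltac:(lia)). rewrite Hx, Hy in H3.
    intuition congruence.
Qed.

Theorem theorem4p2 (z x y : R) (zb xb yb : nat -> bool) (l : nat) :
  0 <= z <= 1 -> 0 <= x <= 1 -> 0 <= y <= 1 ->
  z = x + y ->
  concise_expansion zb z -> concise_expansion xb x -> concise_expansion yb y ->
  zb l = true -> (forall j : nat, (l < j)%nat -> zb j = false) ->
  (pattern1 xb yb l \/ pattern2 xb yb l \/ pattern3 xb yb l) /\
  ~ (pattern1 xb yb l /\ pattern2 xb yb l) /\
  ~ (pattern1 xb yb l /\ pattern3 xb yb l) /\
  ~ (pattern2 xb yb l /\ pattern3 xb yb l).
Proof.
  intros _ _ _ -> Hz Hx Hy Hzl Hz_after.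
  split; [|apply patterns_exclusive].
  apply (patterns_of_carries xb yb zb); [|exact Hzl | exact Hz_after].
  intros n. exact (prefix_add_carry xb yb zb x y n Hx Hy Hz).
Qed.
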